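(* Let $\alpha>0$ and $\zeta>0$, and define the power series $$\Omega_0^{(4)}(v)=\frac{\Gamma(3/4)}{\Gamma(\zeta/4)}\sum_{l=0}^{\infty}\frac{\Gamma(l/2+\zeta/4)}{l!\,\Gamma(l/2+3/4)}\Big(\frac{-v^2}{2\alpha^{1/2}}\Big)^l,$$ $$\Omega_1^{(4)}(v)=\frac{v\sqrt{\pi/2}}{\Gamma[(\zeta+1)/4]}\sum_{l=0}^{\infty}\frac{\Gamma[(l+1+\zeta)/4]\,s(l)}{\Gamma(l/4+1)\,\Gamma[(l+3)/2]}\Big[\frac{-v}{(4\alpha)^{1/4}}\Big]^l,$$ with $s(l)=2^{-1/2}[\cos(l\pi/4)+\sin(l\pi/4)]\cos(l\pi/4)$. Let $$f_1(v)={}_1F_2\Big(\tfrac{\zeta}{4};\tfrac12,\tfrac34;\tfrac{v^4}{16\alpha}\Big),\quad f_2(v)=v\,{}_1F_2\Big(\tfrac{\zeta+1}{4};\tfrac34,\tfrac54;\tfrac{v^4}{16\alpha}\Big),\quad f_3(v)=v^2\,{}_1F_2\Big(\tfrac{\zeta+2}{4};\tfrac54,\tfrac32;\tfrac{v^4}{16\alpha}\Big).$$ Then $f_1,f_2,f_3$ are three linearly independent solutions of $\big(\alpha\,\tfrac{d^3}{dv^3}-v^2\tfrac{d}{dv}-\zeta v\big)\Omega(v)=0$, and $$\Omega_0^{(4)}=f_1-\frac{2\,\Gamma(3/4)\,\Gamma[(\zeta+2)/4]}{\sqrt{\alpha}\,\Gamma(1/4)\,\Gamma(\zeta/4)}\,f_3,\qquad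 \Omega_1^{(4)}=f_2-\frac{(2\pi)^{1/2}\,\Gamma[(\zeta+2)/4]}{\alpha^{1/4}\,\Gamma(1/4)\,\Gamma[(\zeta+1)/4]}\,f_3 .$$
   Context: ${}_1F_2$ is the generalized hypergeometric function; $\alpha^{1/2},\alpha^{1/4}$ denote positive roots. *)

From Stdlib Require Import Arith Factorial Reals Lra ClassicalEpsilon.
Open Scope R_scope.

Fixpoint poch (a : R) (k : nat) : R :=
  match k with
  | O => 1
  | S k' => poch a k' * (a + INR k')
  end.

(* Euler Gamma function via Gauss' limit formula
   Gamma(x) = lim_n n! n^x / (x (x+1) ... (x+n)),  valid for x > 0
   (Stdlib has no Gamma function). *)
Definition gamma_seq (x : R) (n : nat) : R :=
  INR (fact n) * Rpower (INR n) x / poch x (S n).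

Definition Gamma (x : R) : R :=
  epsilon (inhabits 0) (fun g => Un_cv (gamma_seq x) g).

Definition F12_term (a b1 b2 z : R) (k : nat) : R :=
  poch a k / (poch b1 k * poch b2 k) * z ^ k / INR (fact k).

Definition F12 (a b1 b2 z : R) : R :=
  epsilon (inhabits 0) (fun s => infinite_sum (F12_term a b1 b2 z) s).

Definition f1 (alpha zeta v : R) : R :=
  F12 (zeta / 4) (1 / 2) (3 / 4) (v ^ 4 / (16 * alpha)).
Definition f2 (alpha zeta v : R) : R :=
  v * F12 ((zeta + 1) / 4) (3 / 4) (5 / 4) (v ^ 4 / (16 * alpha)).
Definition f3 (alpha zeta v : R) : R :=
  v ^ 2 * F12 ((zeta + 2) / 4) (5 / 4) (3 / 2) (v ^ 4 / (16 * alpha)).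

Definition solves_ODE (alpha zeta : R) (f : R -> R) : Prop :=
  exists f1' f2' f3' : R -> R,
    (forall v, derivable_pt_lim f v (f1' v)) /\
    (forall v, derivable_pt_lim f1' v (f2' v)) /\
    (forall v, derivable_pt_lim f2' v (f3' v)) /\
    (forall v, alpha * f3' v - v ^ 2 * f1' v - zeta * v * f v = 0).

Definition lin_indep3 (g1 g2 g3 : R -> R) : Prop :=
  forall c1 c2 c3 : R,
    (forall v, c1 * g1 v + c2 * g2 v + c3 * g3 v = 0) ->
    c1 = 0 /\ c2 = 0 /\ c3 = 0.

Definition s_fun (l : nat) : R :=
  / sqrt 2 * (cos (INR l * PI / 4) + sin (INR l * PI / 4)) * cos (INR l * PI / 4).

Definition Omega0_term (alpha zeta v : R) (l : nat) : R :=
  Gamma (3 / 4) / Gamma (zeta / 4) *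
  (Gamma (INR l / 2 + zeta / 4) / (INR (fact l) * Gamma (INR l / 2 + 3 / 4)) *
   (- v ^ 2 / (2 * sqrt alpha)) ^ l).

Definition Omega1_term (alpha zeta v : R) (l : nat) : R :=
  v * sqrt (PI / 2) / Gamma ((zeta + 1) / 4) *
  (Gamma ((INR l + 1 + zeta) / 4) * s_fun l /
     (Gamma (INR l / 4 + 1) * Gamma ((INR l + 3) / 2)) *
   (- v / Rpower (4 * alpha) (1 / 4)) ^ l).

From Stdlib Require Import Arith Factorial Reals Lra Lia ClassicalEpsilon FunctionalExtensionality.
From Coquelicot Require Import Coquelicot.
Open Scope R_scope.

(* With w = v^4 / (16 alpha), the function v^j 1F2(a; b1, b2; w) is the power series
   sum_k c_k v^(4k+j), and its coefficients obey the recurrence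
   alpha (n+2)(n+3)(n+4) c_(n+4) = (n + zeta) c_n, which is the coefficient form of the ODE,
   exactly when a = (zeta + j)/4 and {b1, b2, 1} = {(j+2)/4, (j+3)/4, (j+4)/4}.  The cases
   j = 0, 1, 2 are f1, f2, f3; they are independent because of their values at 0 and at +-1.
   For the Omega identities one sorts the terms of Omega0 by parity and those of Omega1 by
   residue mod 4 (s(l) vanishes for l = 2, 3 mod 4).  Gamma (x + k) = Gamma x (x)_k, the
   duplication formulas (2k)! = 4^k k! (1/2)_k and (2k+1)! = 4^k k! (3/2)_k, and
   Gamma (1/2) = sqrt PI (from Wallis' integrals) turn each block into a 1F2 series.  Gauss'
   limit defining Gamma converges because it is monotone and bounded on (0, 1] by Bernoulli's
   inequality, and Gamma (x + 1) = x Gamma x extends this to all x > 0. *)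

Lemma is_lim_seq_inv_INR_plus (c : R) : 0 < c -> is_lim_seq (fun n => / (INR n + c)) 0.
Proof.
  intros Hc.
  replace (Finite 0) with (Rbar_inv p_infty) by reflexivity.
  apply is_lim_seq_inv; [| discriminate].
  eapply is_lim_seq_plus; [apply is_lim_seq_INR | apply is_lim_seq_const | reflexivity].
Qed.

Lemma is_lim_seq_ratio_INR_plus (c d : R) : 0 < d ->
  is_lim_seq (fun n => (INR n + c) / (INR n + d)) 1.
Proof.
  intros Hd.
  apply (is_lim_seq_ext (fun n => 1 + (c - d) * / (INR n + d))).
  { intros n; pose proof (pos_INR n); field; lra. }
  replace (Finite 1) with (Finite (1 + (c - d) * 0)) by (f_equal; ring).
  apply is_lim_seq_plus'; [apply is_lim_seq_const |].
  apply is_lim_seq_mult'; [apply is_lim_seq_const | apply is_lim_seq_inv_INR_plus, Hd].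
Qed.

(** * Power series *)

Lemma is_pseries_zero (x : R) : is_pseries (fun _ : nat => 0) x 0.
Proof.
  apply is_pseries_R, is_series_Reals.
  intros eps Heps; exists 0%nat; intros n _.
  assert (Hsum : sum_f_R0 (fun n => 0 * x ^ n) n = 0).
  { induction n as [|n IH]; simpl; [ring | rewrite IH; ring]. }
  unfold Rdist; rewrite Hsum, Rminus_0_r, Rabs_R0; exact Heps.
Qed.

Lemma is_series_mult_l (c : R) (a : nat -> R) (l : R) :
  is_series a l -> is_series (fun n => c * a n) (c * l).
Proof. exact (is_series_scal_l (V := R_NormedModule) c a l). Qed.

Lemma is_pseries_mod4 (a : nat -> R) (x l0 l1 l2 l3 : R) :
  is_pseries (fun n => a (4 * n)%nat) (x ^ 4) l0 ->
  is_pseries (fun n => a (4 * n + 1)%nat) (x ^ 4) l1 ->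
  is_pseries (fun n => a (4 * n + 2)%nat) (x ^ 4) l2 ->
  is_pseries (fun n => a (4 * n + 3)%nat) (x ^ 4) l3 ->
  is_pseries a x (l0 + x * l1 + x ^ 2 * l2 + x ^ 3 * l3).
Proof.
  intros H0 H1 H2 H3.
  replace (l0 + x * l1 + x ^ 2 * l2 + x ^ 3 * l3)
    with ((l0 + x ^ 2 * l2) + x * (l1 + x ^ 2 * l3)) by ring.
  assert (Hx4 : (x ^ 2) ^ 2 = x ^ 4) by ring.
  apply is_pseries_odd_even; apply is_pseries_odd_even; rewrite Hx4;
    [revert H0 | revert H2 | revert H1 | revert H3];
    apply is_pseries_ext; intros n; f_equal; lia.
Qed.

Lemma is_pseries_one (a : nat -> R) (l : R) : is_pseries a 1 l <-> is_series a l.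
Proof.
  rewrite is_pseries_R.
  split; apply is_series_ext; intros n; rewrite pow1; simpl; ring.
Qed.

Lemma is_series_interleave2 (t : nat -> R) (l0 l1 : R) :
  is_series (fun n => t (2 * n)%nat) l0 ->
  is_series (fun n => t (2 * n + 1)%nat) l1 ->
  is_series t (l0 + l1).
Proof.
  intros H0 H1; apply is_pseries_one.
  replace (l0 + l1) with (l0 + 1 * l1) by ring.
  apply is_pseries_odd_even; rewrite pow1; now apply is_pseries_one.
Qed.

Lemma is_series_interleave4 (t : nat -> R) (l0 l1 l2 l3 : R) :
  is_series (fun n => t (4 * n)%nat) l0 ->
  is_series (fun n => t (4 * n + 1)%nat) l1 ->
  is_series (fun n => t (4 * n + 2)%nat) l2 ->
  is_series (fun n => t (4 * n + 3)%nat) l3 ->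
  is_series t (l0 + l1 + l2 + l3).
Proof.
  intros H0 H1 H2 H3; apply is_pseries_one.
  replace (l0 + l1 + l2 + l3) with (l0 + 1 * l1 + 1 ^ 2 * l2 + 1 ^ 3 * l3) by ring.
  apply is_pseries_mod4; rewrite pow1; now apply is_pseries_one.
Qed.

Lemma CV_radius_infinite (a : nat -> R) :
  (forall r, CV_disk a r) -> CV_radius a = p_infty.
Proof.
  intros Hdisk; unfold CV_radius.
  destruct (Lub_Rbar_correct (CV_disk a)) as [Hub _].
  destruct (Lub_Rbar (CV_disk a)) as [l | |] eqn:E; [| reflexivity |].
  - specialize (Hub (l + 1) (Hdisk _)); simpl in Hub; lra.
  - destruct (Hub 0 (Hdisk 0)).
Qed.

Definition PS_spread4 (j : nat) (c : nat -> R) (n : nat) : R :=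
  if Nat.eqb (n mod 4) j then c (n / 4)%nat else 0.

Lemma PS_spread4_eq (j : nat) (c : nat -> R) (k i : nat) : (i < 4)%nat ->
  PS_spread4 j c (4 * k + i) = if Nat.eqb i j then c k else 0.
Proof.
  intros Hi; unfold PS_spread4.
  rewrite <- (Nat.mod_unique (4 * k + i) 4 k i Hi eq_refl).
  now rewrite <- (Nat.div_unique (4 * k + i) 4 k i Hi eq_refl).
Qed.

Lemma is_pseries_spread4 (j : nat) (c : nat -> R) (x l : R) : (j < 4)%nat ->
  is_pseries c (x ^ 4) l -> is_pseries (PS_spread4 j c) x (x ^ j * l).
Proof.
  intros Hj Hc.
  assert (Hi : forall i, (i < 4)%nat ->
    is_pseries (fun n => PS_spread4 j c (4 * n + i)) (x ^ 4) (if Nat.eqb i j then l else 0)).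
  { intros i Hi; destruct (Nat.eqb_spec i j) as [-> | Hne].
    - revert Hc; apply is_pseries_ext; intros n; rewrite PS_spread4_eq, Nat.eqb_refl; auto.
    - eapply is_pseries_ext; [| apply is_pseries_zero].
      intros n; rewrite PS_spread4_eq by exact Hi; now destruct (Nat.eqb_spec i j). }
  replace (x ^ j * l) with ((if Nat.eqb 0 j then l else 0) + x * (if Nat.eqb 1 j then l else 0)
    + x ^ 2 * (if Nat.eqb 2 j then l else 0) + x ^ 3 * (if Nat.eqb 3 j then l else 0))
    by (destruct j as [| [| [| [| j]]]]; simpl; [ring .. | lia]).
  apply is_pseries_mod4; [| exact (Hi 1%nat ltac:(lia)) | exact (Hi 2%nat ltac:(lia))
                         | exact (Hi 3%nat ltac:(lia))].
  apply (is_pseries_ext (fun n => PS_spread4 j c (4 * n + 0))); [intros n; now rewrite Nat.add_0_r |].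
  exact (Hi 0%nat ltac:(lia)).
Qed.

Lemma CV_disk_spread4 (j : nat) (c : nat -> R) (r : R) : (j < 4)%nat ->
  CV_disk c (r ^ 4) -> CV_disk (PS_spread4 j c) r.
Proof.
  intros Hj [L HL]; exists (Rabs r ^ j * L).
  assert (Habs : is_pseries (fun k => Rabs (c k)) (Rabs r ^ 4) L).
  { apply is_pseries_R; revert HL; apply is_series_ext; intros n.
    rewrite Rabs_mult, <- !RPow_abs; simpl; ring. }
  apply (is_pseries_spread4 j) in Habs; [| exact Hj].
  apply is_pseries_R in Habs; revert Habs; apply is_series_ext; intros n.
  rewrite Rabs_mult, RPow_abs; unfold PS_spread4.
  destruct (Nat.eqb (n mod 4) j); simpl; [| rewrite Rabs_R0]; ring.
Qed.

Lemma PS_spread4_3 (j : nat) (c : nat -> R) : (j < 3)%nat -> PS_spread4 j c 3 = 0.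
Proof.
  intros Hj; change (PS_spread4 j c (4 * 0 + 3) = 0).
  rewrite PS_spread4_eq by lia.
  destruct (Nat.eqb_spec 3 j); [lia | reflexivity].
Qed.

Lemma PS_spread4_recurrence (j : nat) (c : nat -> R) (P Q : nat -> R) : (j < 4)%nat ->
  (forall k, P (4 * k + j)%nat * c (S k) = Q (4 * k + j)%nat * c k) ->
  forall n, P n * PS_spread4 j c (n + 4) = Q n * PS_spread4 j c n.
Proof.
  intros Hj Hc n.
  rewrite (Nat.div_mod_eq n 4); set (k := (n / 4)%nat); set (i := (n mod 4)%nat).
  assert (Hi : (i < 4)%nat) by (apply Nat.mod_upper_bound; lia).
  replace (4 * k + i + 4)%nat with (4 * S k + i)%nat by lia.
  rewrite !PS_spread4_eq by exact Hi.
  destruct (Nat.eqb_spec i j) as [-> | _]; [apply Hc | ring].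
Qed.

Lemma derivable_pt_lim_PSeries (a : nat -> R) (x : R) : CV_radius a = p_infty ->
  derivable_pt_lim (PSeries a) x (PSeries (PS_derive a) x).
Proof.
  intros Ha; apply is_derive_Reals, is_derive_PSeries; now rewrite Ha.
Qed.

Lemma PSeries_solves_ODE (alpha zeta : R) (a : nat -> R) :
  CV_radius a = p_infty -> a 3%nat = 0 ->
  (forall n, alpha * INR (n + 2) * INR (n + 3) * INR (n + 4) * a (n + 4)%nat
             = (INR n + zeta) * a n) ->
  solves_ODE alpha zeta (PSeries a).
Proof.
  intros Ha Ha3 Hrec.
  set (a1 := PS_derive a); set (a2 := PS_derive a1); set (a3 := PS_derive a2).
  assert (Ha1 : CV_radius a1 = p_infty) by (unfold a1; now rewrite CV_radius_derive).
  assert (Ha2 : CV_radius a2 = p_infty) by (unfold a2; now rewrite CV_radius_derive).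
  assert (Ha3' : CV_radius a3 = p_infty) by (unfold a3; now rewrite CV_radius_derive).
  exists (PSeries a1), (PSeries a2), (PSeries a3).
  split; [| split; [| split]]; intros v; try now apply derivable_pt_lim_PSeries.
  assert (Hex : forall b, CV_radius b = p_infty -> ex_pseries b v)
    by (intros b Hb; apply CV_radius_inside; now rewrite Hb).
  assert (Hscal : forall (c : R) (b : nat -> R), ex_pseries b v -> ex_pseries (PS_scal c b) v)
    by (intros c b Hb; apply ex_pseries_scal; [apply Rmult_comm | exact Hb]).
  assert (E3 : ex_pseries (PS_scal alpha a3) v) by apply Hscal, Hex, Ha3'.
  assert (E1 : ex_pseries (PS_scal (-1) (PS_incr_1 (PS_incr_1 a1))) v)
    by apply Hscal, ex_pseries_incr_1, ex_pseries_incr_1, Hex, Ha1.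
  assert (E0 : ex_pseries (PS_scal (- zeta) (PS_incr_1 a)) v)
    by apply Hscal, ex_pseries_incr_1, Hex, Ha.
  (* The coefficient of v^n in alpha f''' - v^2 f' - zeta v f. *)
  assert (Hcoef : forall n,
    PS_plus (PS_plus (PS_scal alpha a3) (PS_scal (-1) (PS_incr_1 (PS_incr_1 a1))))
            (PS_scal (- zeta) (PS_incr_1 a)) n = 0).
  { intros [| [| m]]; unfold PS_plus, PS_scal, a3, a2, a1, PS_derive, PS_incr_1, plus, scal, zero, mult;
      cbn -[INR].
    - rewrite Ha3; ring.
    - specialize (Hrec 0%nat); simpl in Hrec |- *; lra.
    - specialize (Hrec (S m)).
      replace (S m + 2)%nat with (S (S (S m))) in Hrec by lia.
      replace (S m + 3)%nat with (S (S (S (S m)))) in Hrec by lia.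
      replace (S m + 4)%nat with (S (S (S (S (S m))))) in Hrec by lia.
      lra. }
  rewrite <- (PSeries_const_0 v), <- (PSeries_ext _ _ v Hcoef).
  rewrite PSeries_plus, PSeries_plus, !PSeries_scal, !PSeries_incr_1 by auto using ex_pseries_plus.
  simpl; ring.
Qed.

(** * Hypergeometric series *)

Lemma poch_pos (b : R) (k : nat) : 0 < b -> 0 < poch b k.
Proof.
  intros Hb; induction k as [| k IH]; simpl; [lra |].
  pose proof (pos_INR k); apply Rmult_lt_0_compat; lra.
Qed.

Definition hyp_coef (a b1 b2 : R) (k : nat) : R :=
  poch a k / (poch b1 k * poch b2 k) / INR (fact k).

Lemma F12_term_hyp_coef (a b1 b2 z : R) (k : nat) :
  F12_term a b1 b2 z k = hyp_coef a b1 b2 k * z ^ k.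
Proof. unfold F12_term, hyp_coef, Rdiv; ring. Qed.

Section HypergeometricCoefficients.

Variables a b1 b2 : R.
Hypotheses (Ha : 0 < a) (Hb1 : 0 < b1) (Hb2 : 0 < b2).

Lemma hyp_coef_pos (k : nat) : 0 < hyp_coef a b1 b2 k.
Proof.
  unfold hyp_coef; pose proof (INR_fact_lt_0 k).
  pose proof (poch_pos a k Ha); pose proof (poch_pos b1 k Hb1); pose proof (poch_pos b2 k Hb2).
  apply Rdiv_lt_0_compat; [apply Rdiv_lt_0_compat |]; try apply Rmult_lt_0_compat; lra.
Qed.

Lemma hyp_coef_S (k : nat) : hyp_coef a b1 b2 (S k)
  = hyp_coef a b1 b2 k * (a + INR k) / ((b1 + INR k) * (b2 + INR k) * (INR k + 1)).
Proof.
  unfold hyp_coef; simpl poch; rewrite fact_simpl, mult_INR, S_INR.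
  pose proof (INR_fact_lt_0 k); pose proof (pos_INR k).
  pose proof (poch_pos b1 k Hb1); pose proof (poch_pos b2 k Hb2).
  field; repeat split; lra.
Qed.

Lemma hyp_coef_ratio_bound (n : nat) :
  0 <= (a + INR n) / ((b1 + INR n) * (b2 + INR n) * (INR n + 1))
    <= (a + b1) / (b1 * b2) * / (INR n + 1).
Proof.
  pose proof (pos_INR n); set (m := INR n) in *.
  split; [apply Rlt_le, Rdiv_lt_0_compat; [| repeat apply Rmult_lt_0_compat]; lra |].
  set (D := (b1 + m) * (b2 + m) * (m + 1) * (b1 * b2)).
  assert (HD : 0 < D) by (unfold D; repeat apply Rmult_lt_0_compat; lra).
  apply (Rmult_le_reg_r D); [exact HD |].
  replace ((a + m) / ((b1 + m) * (b2 + m) * (m + 1)) * D) with ((a + m) * b1 * b2)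
    by (unfold D; field; repeat split; lra).
  replace ((a + b1) / (b1 * b2) * / (m + 1) * D) with ((a + b1) * (b1 + m) * (b2 + m))
    by (unfold D; field; repeat split; lra).
  assert (H1 : (a + m) * b1 <= (a + b1) * (b1 + m)) by nra.
  assert (H2 : 0 <= (a + b1) * (b1 + m)) by nra.
  apply Rle_trans with ((a + b1) * (b1 + m) * b2).
  - apply Rmult_le_compat_r; lra.
  - apply Rmult_le_compat_l; lra.
Qed.

Lemma CV_disk_hyp_coef (r : R) : CV_disk (hyp_coef a b1 b2) r.
Proof.
  apply (CV_disk_DAlembert _ _ 0); [intros n; apply Rgt_not_eq, hyp_coef_pos | | now left].
  apply (is_lim_seq_le_le (fun _ => 0) _ (fun n => (a + b1) / (b1 * b2) * / (INR n + 1))).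
  - intros n; rewrite hyp_coef_S.
    pose proof (hyp_coef_pos n); pose proof (hyp_coef_ratio_bound n); pose proof (pos_INR n).
    replace (hyp_coef a b1 b2 n * (a + INR n) / ((b1 + INR n) * (b2 + INR n) * (INR n + 1))
             / hyp_coef a b1 b2 n)
      with ((a + INR n) / ((b1 + INR n) * (b2 + INR n) * (INR n + 1))) by (field; repeat split; lra).
    rewrite Rabs_pos_eq; lra.
  - apply is_lim_seq_const.
  - replace (Finite 0) with (Finite ((a + b1) / (b1 * b2) * 0)) by (f_equal; ring).
    apply is_lim_seq_mult'; [apply is_lim_seq_const | apply is_lim_seq_inv_INR_plus; lra].
Qed.

Lemma is_series_hyp_coef (z : R) :
  is_series (fun k => hyp_coef a b1 b2 k * z ^ k) (PSeries (hyp_coef a b1 b2) z).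
Proof.
  exact (proj1 (is_pseries_R _ _ _) (PSeries_correct _ _ (CV_disk_correct _ _ (CV_disk_hyp_coef z)))).
Qed.

Lemma is_series_F12_term (z : R) : is_series (F12_term a b1 b2 z) (PSeries (hyp_coef a b1 b2) z).
Proof.
  apply (is_series_ext (fun k => hyp_coef a b1 b2 k * z ^ k)), is_series_hyp_coef.
  intros k; now rewrite F12_term_hyp_coef.
Qed.

Lemma F12_PSeries (z : R) : F12 a b1 b2 z = PSeries (hyp_coef a b1 b2) z.
Proof.
  assert (Hsum := proj1 (is_series_Reals _ _) (is_series_F12_term z)).
  unfold F12; apply (uniqueness_sum (F12_term a b1 b2 z)); [apply epsilon_spec; eauto | exact Hsum].
Qed.

Lemma is_series_F12 (z : R) : is_series (F12_term a b1 b2 z) (F12 a b1 b2 z).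
Proof. rewrite F12_PSeries; apply is_series_F12_term. Qed.

Lemma F12_ge_1 (z : R) : 0 <= z -> 1 <= F12 a b1 b2 z.
Proof.
  intros Hz; assert (Hsum := proj1 (is_series_Reals _ _) (is_series_F12 z)).
  apply sum_incr with (N := 0%nat) in Hsum.
  - unfold F12_term in Hsum; simpl in Hsum; lra.
  - intros n; rewrite F12_term_hyp_coef.
    apply Rmult_le_pos; [apply Rlt_le, hyp_coef_pos | apply pow_le, Hz].
Qed.

End HypergeometricCoefficients.

Definition rescaled_hyp_coef (alpha a b1 b2 : R) (k : nat) : R :=
  hyp_coef a b1 b2 k * (/ (16 * alpha)) ^ k.

Section QuarticHypergeometric.

Variables (alpha zeta a b1 b2 : R) (j : nat).
Hypotheses (Halpha : 0 < alpha) (Hzeta : 0 < zeta) (Hb1 : 0 < b1) (Hb2 : 0 < b2).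
Hypothesis Ha : a = (zeta + INR j) / 4.
(* {b1, b2, 1} = {(j+2)/4, (j+3)/4, (j+4)/4} as multisets. *)
Hypothesis Hb : forall x : R,
  (x + (INR j + 2) / 4) * (x + (INR j + 3) / 4) * (x + (INR j + 4) / 4)
  = (x + b1) * (x + b2) * (x + 1).
Hypothesis Hj : (j < 3)%nat.

Let c := rescaled_hyp_coef alpha a b1 b2.

Lemma quartic_a_pos : 0 < a.
Proof. rewrite Ha; pose proof (pos_INR j); lra. Qed.

Lemma quartic_PSeries (v : R) :
  v ^ j * F12 a b1 b2 (v ^ 4 / (16 * alpha)) = PSeries (PS_spread4 j c) v.
Proof.
  rewrite F12_PSeries by (apply quartic_a_pos || assumption).
  symmetry; apply is_pseries_unique, is_pseries_spread4; [lia |].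
  apply is_pseries_R, (is_series_ext (fun k => hyp_coef a b1 b2 k * (v ^ 4 / (16 * alpha)) ^ k)).
  - intros k; unfold c, rescaled_hyp_coef, Rdiv; rewrite Rpow_mult_distr; simpl; ring.
  - apply is_series_hyp_coef; auto using quartic_a_pos.
Qed.

Lemma quartic_CV_radius : CV_radius (PS_spread4 j c) = p_infty.
Proof.
  apply CV_radius_infinite; intros r; apply CV_disk_spread4; [lia |].
  destruct (CV_disk_hyp_coef a b1 b2 quartic_a_pos Hb1 Hb2 (r ^ 4 / (16 * alpha))) as [L HL].
  exists L; revert HL; apply is_series_ext; intros k.
  unfold c, rescaled_hyp_coef, Rdiv; rewrite Rpow_mult_distr; f_equal; ring.
Qed.

Lemma quartic_coef_recurrence (k : nat) :
  alpha * INR (4 * k + j + 2) * INR (4 * k + j + 3) * INR (4 * k + j + 4) * c (S k)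
  = (INR (4 * k + j) + zeta) * c k.
Proof.
  unfold c, rescaled_hyp_coef; rewrite hyp_coef_S by (apply quartic_a_pos || assumption).
  rewrite !plus_INR, mult_INR; replace (INR 4) with 4 by (simpl; ring).
  replace (INR 2) with 2 by (simpl; ring); replace (INR 3) with 3 by (simpl; ring).
  assert (E : (4 * INR k + INR j + 2) * (4 * INR k + INR j + 3) * (4 * INR k + INR j + 4)
              = 64 * ((b1 + INR k) * (b2 + INR k) * (INR k + 1)))
    by (rewrite (Rplus_comm b1), (Rplus_comm b2), <- Hb; field).
  pose proof (pos_INR k).
  transitivity (alpha * ((4 * INR k + INR j + 2) * (4 * INR k + INR j + 3) * (4 * INR k + INR j + 4))
    * (hyp_coef a b1 b2 k * (a + INR k) / ((b1 + INR k) * (b2 + INR k) * (INR k + 1)))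
    * (/ (16 * alpha)) ^ S k); [ring |].
  rewrite E, Ha; simpl pow; field; repeat split; lra.
Qed.

Lemma quartic_solves_ODE :
  solves_ODE alpha zeta (fun v => v ^ j * F12 a b1 b2 (v ^ 4 / (16 * alpha))).
Proof.
  replace (fun v => v ^ j * F12 a b1 b2 (v ^ 4 / (16 * alpha))) with (PSeries (PS_spread4 j c))
    by (apply functional_extensionality; intros v; symmetry; apply quartic_PSeries).
  apply PSeries_solves_ODE.
  - exact quartic_CV_radius.
  - now apply PS_spread4_3.
  - apply (PS_spread4_recurrence j c (fun n => alpha * INR (n + 2) * INR (n + 3) * INR (n + 4))
                                      (fun n => INR n + zeta)); [lia |].
    exact quartic_coef_recurrence.
Qed.

End QuarticHypergeometric.

Lemma f1_solves_ODE (alpha zeta : R) : 0 < alpha -> 0 < zeta -> solves_ODE alpha zeta (f1 alpha zeta).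
Proof.
  intros Halpha Hzeta.
  replace (f1 alpha zeta) with (fun v => v ^ 0 * F12 (zeta / 4) (1 / 2) (3 / 4) (v ^ 4 / (16 * alpha)))
    by (apply functional_extensionality; intros v; unfold f1; simpl; ring).
  apply quartic_solves_ODE; intros; simpl; (lra || lia || field).
Qed.

Lemma f2_solves_ODE (alpha zeta : R) : 0 < alpha -> 0 < zeta -> solves_ODE alpha zeta (f2 alpha zeta).
Proof.
  intros Halpha Hzeta.
  replace (f2 alpha zeta)
    with (fun v => v ^ 1 * F12 ((zeta + 1) / 4) (3 / 4) (5 / 4) (v ^ 4 / (16 * alpha)))
    by (apply functional_extensionality; intros v; unfold f2; simpl; ring).
  apply quartic_solves_ODE; intros; simpl; (lra || lia || field).
Qed.

Lemma f3_solves_ODE (alpha zeta : R) : 0 < alpha -> 0 < zeta -> solves_ODE alpha zeta (f3 alpha zeta).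
Proof.
  intros Halpha Hzeta.
  replace (f3 alpha zeta)
    with (fun v => v ^ 2 * F12 ((zeta + 2) / 4) (5 / 4) (3 / 2) (v ^ 4 / (16 * alpha)))
    by (apply functional_extensionality; intros v; unfold f3; simpl; ring).
  apply quartic_solves_ODE; intros; simpl; (lra || lia || field).
Qed.

(* At v = 0 only f1 survives; at v = +-1, f2 is odd and f3 even; the 1F2 values are >= 1. *)
Lemma f123_lin_indep (alpha zeta : R) : 0 < alpha -> 0 < zeta ->
  lin_indep3 (f1 alpha zeta) (f2 alpha zeta) (f3 alpha zeta).
Proof.
  intros Halpha Hzeta c1 c2 c3 Hsum.
  assert (Hz : 0 <= / (16 * alpha)) by (apply Rlt_le, Rinv_0_lt_compat; lra).
  set (F1 := F12 (zeta / 4) (1 / 2) (3 / 4) 0).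
  set (F2 := F12 ((zeta + 1) / 4) (3 / 4) (5 / 4) (/ (16 * alpha))).
  set (F3 := F12 ((zeta + 2) / 4) (5 / 4) (3 / 2) (/ (16 * alpha))).
  assert (HF1 : 1 <= F1) by (apply F12_ge_1; lra).
  assert (HF2 : 1 <= F2) by (apply F12_ge_1; lra).
  assert (HF3 : 1 <= F3) by (apply F12_ge_1; lra).
  assert (H0 := Hsum 0); assert (Hp := Hsum 1); assert (Hm := Hsum (-1)).
  unfold f1, f2, f3 in H0, Hp, Hm.
  replace (0 ^ 4 / (16 * alpha)) with 0 in H0 by (field; lra).
  replace (1 ^ 4 / (16 * alpha)) with (/ (16 * alpha)) in Hp by (field; lra).
  replace ((-1) ^ 4 / (16 * alpha)) with (/ (16 * alpha)) in Hm by (field; lra).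
  fold F1 in H0; fold F2 F3 in Hp, Hm; simpl in H0, Hp, Hm.
  assert (Hc1 : c1 * F1 = 0) by lra.
  apply Rmult_integral in Hc1; destruct Hc1 as [-> | ]; [| lra].
  assert (Hc3 : c3 * F3 = 0) by nra.
  apply Rmult_integral in Hc3; destruct Hc3 as [-> | ]; [| lra].
  assert (Hc2 : c2 * F2 = 0) by nra.
  apply Rmult_integral in Hc2; destruct Hc2 as [-> | ]; [auto | lra].
Qed.

(** * The Gamma function *)

(* Weighted AM-GM: add x times the tangent bound 1 + t <= exp t at t = (1 - x) ln y to
   (1 - x) times the one at t = - x ln y. *)
Lemma Rpower_le_bernoulli (y x : R) : 0 < y -> 0 <= x <= 1 -> Rpower y x <= 1 + x * (y - 1).
Proof.
  intros Hy Hx; unfold Rpower; rewrite <- (exp_ln y) at 2 by exact Hy.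
  set (L := ln y); set (w := exp (x * L)).
  assert (Hw : 0 < w) by apply exp_pos.
  assert (H1 : w * (1 + (1 - x) * L) <= exp L).
  { replace (exp L) with (w * exp ((1 - x) * L)) by (unfold w; rewrite <- exp_plus; f_equal; ring).
    apply Rmult_le_compat_l; [lra | apply exp_ineq1_le]. }
  assert (H2 : w * (1 + - (x * L)) <= 1).
  { replace 1 with (w * exp (- (x * L))) at 2
      by (unfold w; rewrite <- exp_plus, Rplus_opp_r; apply exp_0).
    apply Rmult_le_compat_l; [lra | apply exp_ineq1_le]. }
  assert (Hx1 : 0 <= 1 - x) by lra.
  nra.
Qed.

Lemma poch_succ_shift (x : R) (k : nat) : poch x (S k) = x * poch (x + 1) k.
Proof.
  induction k as [| k IH]; [simpl; ring |].
  change (poch x (S k) * (x + INR (S k)) = x * (poch (x + 1) k * (x + 1 + INR k))).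
  rewrite IH, S_INR; ring.
Qed.

Lemma poch_1 (k : nat) : poch 1 k = INR (fact k).
Proof.
  induction k as [| k IH]; [reflexivity |].
  simpl poch; rewrite IH, fact_simpl, mult_INR, S_INR; ring.
Qed.

Lemma gamma_seq_pos (x : R) (n : nat) : 0 < x -> 0 < gamma_seq x n.
Proof.
  intros Hx; unfold gamma_seq, Rpower.
  apply Rdiv_lt_0_compat; [apply Rmult_lt_0_compat; [apply INR_fact_lt_0 | apply exp_pos] |].
  apply poch_pos, Hx.
Qed.

Lemma gamma_seq_SS (x : R) (m : nat) : 0 < x ->
  gamma_seq x (S (S m)) = gamma_seq x (S m)
    * ((INR m + 2) * Rpower (INR m + 2) x / (Rpower (INR m + 1) x * (x + (INR m + 2)))).
Proof.
  intros Hx; unfold gamma_seq.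
  change (poch x (S (S (S m)))) with (poch x (S (S m)) * (x + INR (S (S m)))).
  rewrite (fact_simpl (S m)), mult_INR, !S_INR.
  pose proof (poch_pos x (S (S m)) Hx); pose proof (INR_fact_lt_0 (S m)); pose proof (pos_INR m).
  assert (0 < Rpower (INR m + 1) x) by apply exp_pos.
  replace (INR m + 1 + 1) with (INR m + 2) by ring.
  field; repeat split; lra.
Qed.

Section GammaSeqUnitInterval.

Variable x : R.
Hypothesis Hx : 0 < x <= 1.

Lemma Rpower_fact_le_poch (m : nat) : Rpower (INR m + 1) x * INR (fact m) <= poch (x + 1) m.
Proof.
  induction m as [| m IH].
  - simpl; unfold Rpower; rewrite Rplus_0_l, ln_1, Rmult_0_r, exp_0; lra.
  - pose proof (pos_INR m).
    assert (Hsplit : Rpower (INR (S m) + 1) x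
                     = Rpower (INR m + 1) x * Rpower ((INR m + 2) / (INR m + 1)) x).
    { rewrite Rpower_mult_distr by (try apply Rdiv_lt_0_compat; lra).
      f_equal; rewrite S_INR; field; lra. }
    assert (HB := Rpower_le_bernoulli ((INR m + 2) / (INR m + 1)) x
                    ltac:(apply Rdiv_lt_0_compat; lra) ltac:(lra)).
    replace (1 + x * ((INR m + 2) / (INR m + 1) - 1)) with ((INR m + 1 + x) / (INR m + 1)) in HB
      by (field; lra).
    assert (Hp : 0 < Rpower (INR m + 1) x) by apply exp_pos.
    pose proof (INR_fact_lt_0 m).
    rewrite Hsplit, fact_simpl, mult_INR, S_INR; simpl poch.
    set (P := Rpower (INR m + 1) x) in *; set (B := Rpower ((INR m + 2) / (INR m + 1)) x) in *.
    apply Rle_trans with (P * INR (fact m) * (INR m + 1) * ((INR m + 1 + x) / (INR m + 1))).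
    + replace (P * B * ((INR m + 1) * INR (fact m))) with (P * INR (fact m) * (INR m + 1) * B) by ring.
      apply Rmult_le_compat_l; [| exact HB].
      apply Rmult_le_pos; [apply Rmult_le_pos |]; lra.
    + replace (P * INR (fact m) * (INR m + 1) * ((INR m + 1 + x) / (INR m + 1)))
        with (P * INR (fact m) * (x + 1 + INR m)) by (field; lra).
      apply Rmult_le_compat_r; lra.
Qed.

Lemma gamma_seq_le_inv (m : nat) : gamma_seq x (S m) <= / x.
Proof.
  unfold gamma_seq; rewrite poch_succ_shift; simpl poch.
  rewrite fact_simpl, mult_INR, S_INR.
  pose proof (pos_INR m); pose proof (Rpower_fact_le_poch m).
  assert (Hp : 0 < Rpower (INR m + 1) x) by apply exp_pos.
  assert (Hq : 0 < poch (x + 1) m) by (apply poch_pos; lra).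
  set (D := x * (poch (x + 1) m * (x + 1 + INR m))).
  assert (HD : 0 < D) by (unfold D; repeat apply Rmult_lt_0_compat; lra).
  apply (Rmult_le_reg_r D); [exact HD |].
  unfold Rdiv; rewrite Rmult_assoc, Rinv_l, Rmult_1_r by lra.
  unfold D; rewrite <- Rmult_assoc, Rinv_l, Rmult_1_l by lra.
  replace ((INR m + 1) * INR (fact m) * Rpower (INR m + 1) x)
    with ((INR m + 1) * (Rpower (INR m + 1) x * INR (fact m))) by ring.
  rewrite Rmult_comm.
  apply Rmult_le_compat; try lra.
  apply Rmult_le_pos; [lra | apply Rlt_le, INR_fact_lt_0].
Qed.

Lemma gamma_seq_incr (m : nat) : gamma_seq x (S m) <= gamma_seq x (S (S m)).
Proof.
  set (p := INR m + 1); set (q := INR m + 2).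
  assert (Hp : 0 < p) by (unfold p; pose proof (pos_INR m); lra).
  assert (Hq : q = p + 1) by (unfold p, q; ring).
  assert (HB := Rpower_le_bernoulli (p / q) x ltac:(apply Rdiv_lt_0_compat; lra) ltac:(lra)).
  replace (1 + x * (p / q - 1)) with ((q - x) / q) in HB by (rewrite Hq; field; lra).
  assert (Hsplit : Rpower p x = Rpower q x * Rpower (p / q) x)
    by (rewrite Rpower_mult_distr by (try apply Rdiv_lt_0_compat; lra); f_equal; field; lra).
  assert (HPq : 0 < Rpower q x) by apply exp_pos.
  assert (HPp : 0 < Rpower p x) by apply exp_pos.
  pose proof (gamma_seq_pos x (S m) ltac:(lra)).
  rewrite gamma_seq_SS by lra; fold p q.
  rewrite <- (Rmult_1_r (gamma_seq x (S m))) at 1.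
  apply Rmult_le_compat_l; [lra |].
  apply (Rmult_le_reg_r (Rpower p x * (x + q))); [apply Rmult_lt_0_compat; lra |].
  unfold Rdiv; rewrite Rmult_assoc, Rinv_l, Rmult_1_l, Rmult_1_r
    by (apply Rgt_not_eq, Rmult_lt_0_compat; lra).
  rewrite Hsplit.
  apply Rle_trans with (Rpower q x * ((q - x) / q) * (x + q)).
  - apply Rmult_le_compat_r; [lra |]. apply Rmult_le_compat_l; lra.
  - replace (Rpower q x * ((q - x) / q) * (x + q)) with (Rpower q x * (q - x * x / q)) by (field; lra).
    assert (0 <= x * x / q) by (apply Rmult_le_pos; [nra | apply Rlt_le, Rinv_0_lt_compat; lra]).
    nra.
Qed.

Lemma gamma_seq_cv_unit : exists l : R, is_lim_seq (gamma_seq x) l /\ 0 < l.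
Proof.
  assert (Hgrow : Un_growing (fun n => gamma_seq x (S n))) by (intros n; apply gamma_seq_incr).
  destruct (growing_cv _ Hgrow) as [l Hl].
  { exists (/ x); intros y [n ->]; apply gamma_seq_le_inv. }
  exists l; split.
  - apply is_lim_seq_incr_1, is_lim_seq_Reals, Hl.
  - pose proof (growing_ineq _ _ Hgrow Hl 0%nat); pose proof (gamma_seq_pos x 1 ltac:(lra)).
    simpl in *; lra.
Qed.

End GammaSeqUnitInterval.

Lemma gamma_seq_shift (x : R) (m : nat) : 0 < x ->
  gamma_seq (x + 1) (S m) = gamma_seq x (S m) * (x * ((INR m + 1) / (INR m + (x + 2)))).
Proof.
  intros Hx; unfold gamma_seq.
  rewrite Rpower_plus, Rpower_1 by (apply lt_0_INR; lia).
  rewrite (poch_succ_shift x (S m)).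
  change (poch (x + 1) (S (S m))) with (poch (x + 1) (S m) * (x + 1 + INR (S m))).
  rewrite S_INR.
  pose proof (poch_pos (x + 1) (S m) ltac:(lra)); pose proof (INR_fact_lt_0 (S m)).
  pose proof (pos_INR m); assert (0 < Rpower (INR m + 1) x) by apply exp_pos.
  field; repeat split; lra.
Qed.

Lemma is_lim_seq_gamma_seq_shift (x l : R) : 0 < x ->
  is_lim_seq (gamma_seq x) l -> is_lim_seq (gamma_seq (x + 1)) (l * x).
Proof.
  intros Hx Hl; apply is_lim_seq_incr_1.
  apply (is_lim_seq_ext (fun m => gamma_seq x (S m) * (x * ((INR m + 1) / (INR m + (x + 2)))))).
  { intros m; symmetry; apply gamma_seq_shift, Hx. }
  replace (l * x) with (l * (x * 1)) by ring.
  apply is_lim_seq_mult'; [exact (proj1 (is_lim_seq_incr_1 _ _) Hl) |].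
  apply is_lim_seq_mult'; [apply is_lim_seq_const | apply is_lim_seq_ratio_INR_plus; lra].
Qed.

Lemma gamma_seq_cv (x : R) : 0 < x -> exists l : R, is_lim_seq (gamma_seq x) l /\ 0 < l.
Proof.
  intros Hx; destruct (INR_unbounded x) as [N HN].
  revert x Hx HN; induction N as [| N IH]; intros x Hx HN.
  - simpl in HN; lra.
  - destruct (Rle_lt_dec x 1) as [Hx1 | Hx1]; [now apply gamma_seq_cv_unit |].
    destruct (IH (x - 1)) as [l [Hl Hpos]]; [lra | rewrite S_INR in HN; lra |].
    exists (l * (x - 1)); split; [| apply Rmult_lt_0_compat; lra].
    replace x with (x - 1 + 1) at 1 by ring.
    apply is_lim_seq_gamma_seq_shift; [lra | exact Hl].
Qed.

Lemma is_lim_seq_Gamma (x : R) : 0 < x -> is_lim_seq (gamma_seq x) (Gamma x).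
Proof.
  intros Hx; destruct (gamma_seq_cv x Hx) as [l [Hl _]].
  apply is_lim_seq_Reals; unfold Gamma; apply epsilon_spec.
  exists l; now apply is_lim_seq_Reals.
Qed.

Lemma Gamma_unique (x l : R) : 0 < x -> is_lim_seq (gamma_seq x) l -> Gamma x = l.
Proof.
  intros Hx Hl; apply (UL_sequence (gamma_seq x)); apply is_lim_seq_Reals;
    [now apply is_lim_seq_Gamma | exact Hl].
Qed.

Lemma Gamma_pos (x : R) : 0 < x -> 0 < Gamma x.
Proof.
  intros Hx; destruct (gamma_seq_cv x Hx) as [l [Hl Hpos]].
  now rewrite (Gamma_unique x l Hx Hl).
Qed.

Lemma Gamma_succ (x : R) : 0 < x -> Gamma (x + 1) = x * Gamma x.
Proof.
  intros Hx; rewrite Rmult_comm; apply Gamma_unique; [lra |].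
  apply is_lim_seq_gamma_seq_shift, is_lim_seq_Gamma; exact Hx.
Qed.

Lemma Gamma_plus_INR (x : R) (k : nat) : 0 < x -> Gamma (x + INR k) = Gamma x * poch x k.
Proof.
  intros Hx; induction k as [| k IH]; [simpl; rewrite Rplus_0_r; ring |].
  rewrite S_INR; simpl poch.
  replace (x + (INR k + 1)) with (x + INR k + 1) by ring.
  rewrite Gamma_succ, IH by (pose proof (pos_INR k); lra); ring.
Qed.

Lemma Gamma_1 : Gamma 1 = 1.
Proof.
  apply Gamma_unique; [lra |]; apply is_lim_seq_incr_1.
  apply (is_lim_seq_ext (fun m => (INR m + 1) / (INR m + 2))).
  - intros m; unfold gamma_seq; rewrite Rpower_1 by (apply lt_0_INR; lia).
    change (poch 1 (S (S m))) with (poch 1 (S m) * (1 + INR (S m))).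
    rewrite poch_1, fact_simpl, mult_INR, !S_INR.
    pose proof (INR_fact_lt_0 m); pose proof (pos_INR m); field; repeat split; lra.
  - apply is_lim_seq_ratio_INR_plus; lra.
Qed.

(** * Wallis integrals and Gamma (1/2) *)

(* The primitive of sin^n vanishing at 0, given by the reduction formula. *)
Fixpoint int_sin_pow (n : nat) (x : R) : R :=
  match n with
  | O => x
  | S O => 1 - cos x
  | S (S m as n1) => - (sin x ^ n1 * cos x) / INR (S n1) + INR n1 / INR (S n1) * int_sin_pow m x
  end.

Lemma derivable_pt_lim_int_sin_pow (n : nat) (x : R) :
  derivable_pt_lim (int_sin_pow n) x (sin x ^ n).
Proof.
  revert x; induction n as [n IH] using (well_founded_induction lt_wf); intros x.
  destruct n as [| [| m]].
  - apply derivable_pt_lim_id.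
  - replace (sin x ^ 1) with (0 - - sin x) by ring.
    apply (derivable_pt_lim_minus (fun _ => 1) cos);
      [apply derivable_pt_lim_const | apply derivable_pt_lim_cos].
  - set (c := INR (S (S m))).
    assert (Hc : 0 < c) by (apply lt_0_INR; lia).
    assert (Dpow : derivable_pt_lim (fun y => sin y ^ S m) x (INR (S m) * sin x ^ m * cos x)).
    { replace (INR (S m) * sin x ^ m * cos x) with (INR (S m) * sin x ^ pred (S m) * cos x) by reflexivity.
      apply (derivable_pt_lim_comp sin (fun y => y ^ S m));
        [apply derivable_pt_lim_sin | apply derivable_pt_lim_pow]. }
    assert (D := derivable_pt_lim_plus _ _ x _ _
      (derivable_pt_lim_scal _ (- / c) x _ (derivable_pt_lim_mult _ _ x _ _ Dpow (derivable_pt_lim_cos x)))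
      (derivable_pt_lim_scal _ (INR (S m) / c) x _ (IH m ltac:(lia) x))).
    replace (int_sin_pow (S (S m))) with
      (plus_fct (mult_real_fct (- / c) (mult_fct (fun y => sin y ^ S m) cos))
                (mult_real_fct (INR (S m) / c) (int_sin_pow m)))
      by (apply functional_extensionality; intros y; unfold plus_fct, mult_real_fct, mult_fct;
          cbn [int_sin_pow]; fold c; unfold Rdiv; ring).
    replace (sin x ^ S (S m)) with
      (- / c * (INR (S m) * sin x ^ m * cos x * cos x + sin x ^ S m * - sin x)
       + INR (S m) / c * sin x ^ m); [exact D |].
    assert (Ecos : cos x * cos x = 1 - sin x * sin x)
      by (pose proof (sin2_cos2 x); unfold Rsqr in *; lra).
    replace (INR (S m) * sin x ^ m * cos x * cos x) with (INR (S m) * sin x ^ m * (1 - sin x * sin x))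
      by (rewrite <- Ecos; ring).
    unfold c; rewrite !S_INR; simpl pow.
    field; pose proof (pos_INR m); lra.
Qed.

Lemma int_sin_pow_0 (n : nat) : int_sin_pow n 0 = 0.
Proof.
  induction n as [n IH] using (well_founded_induction lt_wf).
  destruct n as [| [| m]]; cbn [int_sin_pow].
  - reflexivity.
  - rewrite cos_0; ring.
  - rewrite IH, sin_0 by lia; simpl; unfold Rdiv; ring.
Qed.

Definition wallis (n : nat) : R := int_sin_pow n (PI / 2).

Lemma wallis_SS (m : nat) : wallis (S (S m)) = INR (S m) / INR (S (S m)) * wallis m.
Proof. unfold wallis; cbn [int_sin_pow]; rewrite cos_PI2; unfold Rdiv; ring. Qed.

Lemma wallis_S_le (n : nat) : wallis (S n) <= wallis n.
Proof.
  destruct (MVT_cor2 (fun y => int_sin_pow n y - int_sin_pow (S n) y)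
                     (fun y => sin y ^ n - sin y ^ S n) 0 (PI / 2) PI2_RGT_0) as [c [Hc Hc_in]].
  { intros c _; apply derivable_pt_lim_minus; apply derivable_pt_lim_int_sin_pow. }
  rewrite !int_sin_pow_0 in Hc.
  assert (Hsin : 0 <= sin c <= 1)
    by (split; [apply sin_ge_0 | apply SIN_bound]; pose proof PI_RGT_0; lra).
  assert (0 <= sin c ^ n - sin c ^ S n)
    by (simpl; assert (0 <= sin c ^ n) by (apply pow_le; lra); nra).
  unfold wallis; pose proof PI2_RGT_0; nra.
Qed.

(* C(2n, n) / 4^n *)
Definition central_coef (n : nat) : R := poch (1 / 2) n / INR (fact n).

Lemma central_coef_pos (n : nat) : 0 < central_coef n.
Proof. apply Rdiv_lt_0_compat; [apply poch_pos; lra | apply INR_fact_lt_0]. Qed.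

Lemma central_coef_S (n : nat) : central_coef (S n) = central_coef n * (2 * INR n + 1) / (2 * INR n + 2).
Proof.
  unfold central_coef; simpl poch; rewrite fact_simpl, mult_INR, S_INR.
  pose proof (INR_fact_lt_0 n); pose proof (pos_INR n); field; lra.
Qed.

Lemma wallis_closed_form (n : nat) :
  wallis (2 * n) = PI / 2 * central_coef n /\ wallis (2 * n + 1) = / ((2 * INR n + 1) * central_coef n).
Proof.
  induction n as [| n [IHe IHo]].
  - unfold wallis, central_coef; simpl; rewrite cos_PI2; split; field.
  - replace (2 * S n + 1)%nat with (S (S (2 * n + 1))) by lia.
    replace (2 * S n)%nat with (S (S (2 * n))) by lia.
    rewrite !wallis_SS, IHe, IHo, central_coef_S.
    pose proof (central_coef_pos n); pose proof (pos_INR n).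
    rewrite !S_INR, !plus_INR, !mult_INR; simpl (INR 2); simpl (INR 1).
    split; field; lra.
Qed.

Lemma wallis_product_bounds (n : nat) :
  PI * INR n / (INR n + 1) <= 4 * INR n / (central_coef n ^ 2 * (2 * INR n + 1) ^ 2) <= PI.
Proof.
  destruct (wallis_closed_form n) as [E0 E1]; destruct (wallis_closed_form (S n)) as [E2 _].
  assert (M1 := wallis_S_le (2 * n)); replace (S (2 * n)) with (2 * n + 1)%nat in M1 by lia.
  assert (M2 := wallis_S_le (2 * n + 1)); replace (S (2 * n + 1)) with (2 * S n)%nat in M2 by lia.
  rewrite E0, E1 in M1; rewrite E1, E2, central_coef_S in M2.
  pose proof (central_coef_pos n); pose proof (pos_INR n); pose proof PI_RGT_0.
  set (w := central_coef n) in *; set (m := INR n) in *.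
  assert (Hd : 0 < (2 * m + 1) * w) by nra.
  assert (A : 2 <= PI * w * w * (2 * m + 1)).
  { apply (Rmult_le_compat_l ((2 * m + 1) * w)) in M1; [| lra].
    rewrite Rinv_r in M1 by lra; nra. }
  assert (B : PI * w * w * (2 * m + 1) * (2 * m + 1) <= 2 * (2 * m + 2)).
  { apply (Rmult_le_compat_l ((2 * m + 1) * w)) in M2; [| lra].
    rewrite Rinv_r in M2 by lra.
    replace ((2 * m + 1) * w * (PI / 2 * (w * (2 * m + 1) / (2 * m + 2))))
      with (PI * w * w * (2 * m + 1) * (2 * m + 1) / (2 * (2 * m + 2))) in M2 by (field; lra).
    apply (Rmult_le_compat_r (2 * (2 * m + 2))) in M2; [| lra].
    unfold Rdiv in M2; rewrite Rmult_assoc, Rinv_l, Rmult_1_r in M2 by lra; lra. }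
  assert (Q : 0 < w ^ 2 * (2 * m + 1) ^ 2) by (simpl; nra).
  split.
  - apply (Rmult_le_reg_r ((m + 1) * (w ^ 2 * (2 * m + 1) ^ 2))); [nra |].
    replace (PI * m / (m + 1) * ((m + 1) * (w ^ 2 * (2 * m + 1) ^ 2)))
      with (m * (PI * w * w * (2 * m + 1) * (2 * m + 1))) by (field; lra).
    replace (4 * m / (w ^ 2 * (2 * m + 1) ^ 2) * ((m + 1) * (w ^ 2 * (2 * m + 1) ^ 2)))
      with (4 * m * (m + 1)) by (field; lra).
    nra.
  - apply (Rmult_le_reg_r (w ^ 2 * (2 * m + 1) ^ 2)); [exact Q |].
    replace (4 * m / (w ^ 2 * (2 * m + 1) ^ 2) * (w ^ 2 * (2 * m + 1) ^ 2)) with (4 * m) by (field; lra).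
    nra.
Qed.

Lemma gamma_seq_half_sq (n : nat) :
  gamma_seq (1 / 2) (S n) * gamma_seq (1 / 2) (S n)
  = 4 * INR (S n) / (central_coef (S n) ^ 2 * (2 * INR (S n) + 1) ^ 2).
Proof.
  set (m := INR (S n)); assert (Hm : 0 < m) by (apply lt_0_INR; lia).
  assert (Hg : gamma_seq (1 / 2) (S n) = 2 * sqrt m / (central_coef (S n) * (2 * m + 1))).
  { unfold gamma_seq, central_coef; replace (1 / 2) with (/ 2) by field.
    rewrite Rpower_sqrt by exact Hm; replace (/ 2) with (1 / 2) by field.
    change (poch (1 / 2) (S (S n))) with (poch (1 / 2) (S n) * (1 / 2 + m)).
    pose proof (poch_pos (1 / 2) (S n) ltac:(lra)); pose proof (INR_fact_lt_0 (S n)).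
    fold m; field; repeat split; lra. }
  rewrite Hg; pose proof (central_coef_pos (S n)).
  replace (2 * sqrt m / (central_coef (S n) * (2 * m + 1)) * (2 * sqrt m / (central_coef (S n) * (2 * m + 1))))
    with (4 * (sqrt m * sqrt m) / (central_coef (S n) ^ 2 * (2 * m + 1) ^ 2)) by (field; lra).
  rewrite sqrt_sqrt by lra; reflexivity.
Qed.

Lemma Gamma_half : Gamma (1 / 2) = sqrt PI.
Proof.
  pose proof PI_RGT_0.
  apply Gamma_unique; [lra |]; apply is_lim_seq_incr_1.
  apply (is_lim_seq_ext (fun n => sqrt (gamma_seq (1 / 2) (S n) * gamma_seq (1 / 2) (S n)))).
  { intros n; apply sqrt_square, Rlt_le, gamma_seq_pos; lra. }
  apply is_lim_seq_continuous; [apply continuity_pt_sqrt; lra |].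
  apply (is_lim_seq_le_le (fun n => PI * ((INR n + 1) / (INR n + 2))) _ (fun _ => PI)).
  - intros n; rewrite gamma_seq_half_sq.
    replace ((INR n + 1) / (INR n + 2)) with (INR (S n) / (INR (S n) + 1))
      by (rewrite S_INR; f_equal; ring).
    unfold Rdiv; rewrite <- Rmult_assoc; apply wallis_product_bounds.
  - replace (Finite PI) with (Finite (PI * 1)) by (f_equal; ring).
    apply is_lim_seq_mult'; [apply is_lim_seq_const | apply is_lim_seq_ratio_INR_plus; lra].
  - apply is_lim_seq_const.
Qed.

(** * The series Omega0 and Omega1 *)

Lemma Gamma_at (x y : R) (k : nat) : 0 < x -> y = x + INR k -> Gamma y = Gamma x * poch x k.
Proof. intros Hx ->; apply Gamma_plus_INR, Hx. Qed.

Lemma Gamma_5_4 : Gamma (5 / 4) = Gamma (1 / 4) / 4.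
Proof. replace (5 / 4) with (1 / 4 + 1) by field; rewrite Gamma_succ by lra; field. Qed.

Lemma Gamma_3_2 : Gamma (3 / 2) = sqrt PI / 2.
Proof. replace (3 / 2) with (1 / 2 + 1) by field; rewrite Gamma_succ, Gamma_half by lra; field. Qed.

Lemma fact_double (k : nat) : INR (fact (2 * k)) = 4 ^ k * INR (fact k) * poch (1 / 2) k.
Proof.
  induction k as [| k IH]; [simpl; ring |].
  replace (2 * S k)%nat with (S (S (2 * k))) by lia.
  rewrite !fact_simpl, !mult_INR, IH; simpl poch; rewrite !S_INR, mult_INR; simpl (INR 2); simpl pow.
  field.
Qed.

Lemma fact_double_succ (k : nat) : INR (fact (2 * k + 1)) = 4 ^ k * INR (fact k) * poch (3 / 2) k.
Proof.
  induction k as [| k IH]; [simpl; ring |].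
  replace (2 * S k + 1)%nat with (S (S (2 * k + 1))) by lia.
  rewrite !fact_simpl, !mult_INR, IH; simpl poch; rewrite !S_INR, plus_INR, mult_INR.
  simpl (INR 2); simpl (INR 1); simpl pow; field.
Qed.

Lemma poch_3_2_double (k : nat) : poch (3 / 2) (2 * k) = 4 ^ k * poch (3 / 4) k * poch (5 / 4) k.
Proof.
  induction k as [| k IH]; [simpl; ring |].
  replace (2 * S k)%nat with (S (S (2 * k))) by lia.
  change (poch (3 / 2) (S (S (2 * k))))
    with (poch (3 / 2) (2 * k) * (3 / 2 + INR (2 * k)) * (3 / 2 + INR (S (2 * k)))).
  rewrite IH; cbn [poch]; rewrite S_INR, mult_INR; simpl (INR 2); simpl pow; field.
Qed.

Section Omega0.

Variables alpha zeta v : R.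
Hypotheses (Halpha : 0 < alpha) (Hzeta : 0 < zeta).

Let z := v ^ 4 / (16 * alpha).

Lemma Omega0_base_sq : (- v ^ 2 / (2 * sqrt alpha)) ^ 2 = 4 * z.
Proof.
  assert (Hs := sqrt_sqrt alpha ltac:(lra)); assert (0 < sqrt alpha) by (apply sqrt_lt_R0, Halpha).
  unfold z; rewrite <- Hs at 2; field; lra.
Qed.

Lemma Omega0_term_even (k : nat) :
  Omega0_term alpha zeta v (2 * k) = F12_term (zeta / 4) (1 / 2) (3 / 4) z k.
Proof.
  unfold Omega0_term, F12_term.
  rewrite (Gamma_at (zeta / 4) (INR (2 * k) / 2 + zeta / 4) k),
          (Gamma_at (3 / 4) (INR (2 * k) / 2 + 3 / 4) k) by (try lra; rewrite mult_INR; simpl; field).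
  rewrite fact_double, pow_mult, Omega0_base_sq, Rpow_mult_distr.
  pose proof (Gamma_pos (zeta / 4) ltac:(lra)); pose proof (Gamma_pos (3 / 4) ltac:(lra)).
  pose proof (poch_pos (1 / 2) k ltac:(lra)); pose proof (poch_pos (3 / 4) k ltac:(lra)).
  pose proof (INR_fact_lt_0 k); pose proof (pow_lt 4 k ltac:(lra)).
  field; repeat split; lra.
Qed.

Lemma Omega0_term_odd (k : nat) :
  Omega0_term alpha zeta v (2 * k + 1)
  = - (2 * Gamma (3 / 4) * Gamma ((zeta + 2) / 4) / (sqrt alpha * Gamma (1 / 4) * Gamma (zeta / 4)))
    * (v ^ 2 * F12_term ((zeta + 2) / 4) (5 / 4) (3 / 2) z k).
Proof.
  unfold Omega0_term, F12_term.
  rewrite (Gamma_at ((zeta + 2) / 4) (INR (2 * k + 1) / 2 + zeta / 4) k),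
          (Gamma_at (5 / 4) (INR (2 * k + 1) / 2 + 3 / 4) k)
    by (try lra; rewrite plus_INR, mult_INR; simpl; field).
  rewrite Gamma_5_4, fact_double_succ, pow_add, pow_mult, Omega0_base_sq, Rpow_mult_distr.
  pose proof (Gamma_pos (zeta / 4) ltac:(lra)); pose proof (Gamma_pos (3 / 4) ltac:(lra)).
  pose proof (Gamma_pos ((zeta + 2) / 4) ltac:(lra)).
  pose proof (Gamma_pos (1 / 4) ltac:(lra)).
  pose proof (poch_pos (3 / 2) k ltac:(lra)); pose proof (poch_pos (5 / 4) k ltac:(lra)).
  pose proof (poch_pos ((zeta + 2) / 4) k ltac:(lra)).
  pose proof (INR_fact_lt_0 k); pose proof (pow_lt 4 k ltac:(lra)).
  assert (0 < sqrt alpha) by (apply sqrt_lt_R0, Halpha).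
  simpl pow; field; repeat split; lra.
Qed.

Lemma Omega0_series :
  infinite_sum (Omega0_term alpha zeta v)
    (f1 alpha zeta v
     - 2 * Gamma (3 / 4) * Gamma ((zeta + 2) / 4)
         / (sqrt alpha * Gamma (1 / 4) * Gamma (zeta / 4)) * f3 alpha zeta v).
Proof.
  apply is_series_Reals; unfold f1, f3; fold z.
  set (K := 2 * Gamma (3 / 4) * Gamma ((zeta + 2) / 4)
              / (sqrt alpha * Gamma (1 / 4) * Gamma (zeta / 4))).
  replace (_ - K * _) with (F12 (zeta / 4) (1 / 2) (3 / 4) z
    + - K * (v ^ 2 * F12 ((zeta + 2) / 4) (5 / 4) (3 / 2) z)) by ring.
  apply is_series_interleave2.
  - apply (is_series_ext (F12_term (zeta / 4) (1 / 2) (3 / 4) z)).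
    + intros k; symmetry; apply Omega0_term_even.
    + apply is_series_F12; lra.
  - apply (is_series_ext (fun k => - K * (v ^ 2 * F12_term ((zeta + 2) / 4) (5 / 4) (3 / 2) z k))).
    + intros k; symmetry; apply Omega0_term_odd.
    + apply is_series_mult_l, is_series_mult_l, is_series_F12; lra.
Qed.

End Omega0.

Lemma s_fun_add4 (l : nat) : s_fun (l + 4) = s_fun l.
Proof.
  unfold s_fun; rewrite plus_INR; replace (INR 4) with 4 by (simpl; ring).
  replace ((INR l + 4) * PI / 4) with (INR l * PI / 4 + PI) by field.
  rewrite neg_cos, neg_sin; ring.
Qed.

Lemma s_fun_mod4 (k j : nat) : s_fun (4 * k + j) = s_fun j.
Proof.
  induction k as [| k IH]; [reflexivity |].
  replace (4 * S k + j)%nat with (4 * k + j + 4)%nat by lia; rewrite s_fun_add4; exact IH.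
Qed.

Lemma s_fun_0 : s_fun 0 = / sqrt 2.
Proof. unfold s_fun; simpl; replace (0 * PI / 4) with 0 by field; rewrite cos_0, sin_0; ring. Qed.

Lemma s_fun_1 : s_fun 1 = / sqrt 2.
Proof.
  unfold s_fun; simpl; replace (1 * PI / 4) with (PI / 4) by field; rewrite cos_PI4, sin_PI4.
  assert (Hs : sqrt 2 * sqrt 2 = 2) by (apply sqrt_sqrt; lra).
  assert (0 < sqrt 2) by (apply sqrt_lt_R0; lra).
  replace (/ sqrt 2 * (1 / sqrt 2 + 1 / sqrt 2) * (1 / sqrt 2)) with (2 / (sqrt 2 * sqrt 2) * / sqrt 2)
    by (field; lra).
  rewrite Hs; field; lra.
Qed.

Lemma s_fun_2 : s_fun 2 = 0.
Proof. unfold s_fun; replace (INR 2 * PI / 4) with (PI / 2) by (simpl; field); rewrite cos_PI2; ring. Qed.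

Lemma s_fun_3 : s_fun 3 = 0.
Proof.
  unfold s_fun; replace (INR 3 * PI / 4) with (PI / 4 + PI / 2) by (simpl; field).
  rewrite cos_plus, sin_plus, cos_PI2, sin_PI2, cos_PI4, sin_PI4; ring.
Qed.

Lemma sqrt_PI_div_2 : sqrt (PI / 2) = sqrt PI / 2 * sqrt 2.
Proof.
  pose proof PI_RGT_0; pose proof (sqrt_pos PI); pose proof (sqrt_pos 2).
  apply sqrt_lem_1; [lra | apply Rmult_le_pos; lra |].
  replace (sqrt PI / 2 * sqrt 2 * (sqrt PI / 2 * sqrt 2)) with (sqrt PI * sqrt PI * (sqrt 2 * sqrt 2) / 4)
    by field.
  rewrite !sqrt_sqrt by lra; field.
Qed.

Lemma sqrt_2_PI : sqrt (2 * PI) = 2 * sqrt PI / sqrt 2.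
Proof.
  pose proof PI_RGT_0; pose proof (sqrt_pos PI); assert (0 < sqrt 2) by (apply sqrt_lt_R0; lra).
  apply sqrt_lem_1; [lra | apply Rmult_le_pos; [lra | apply Rlt_le, Rinv_0_lt_compat; lra] |].
  replace (2 * sqrt PI / sqrt 2 * (2 * sqrt PI / sqrt 2)) with (4 * (sqrt PI * sqrt PI) / (sqrt 2 * sqrt 2))
    by (field; lra).
  rewrite !sqrt_sqrt by lra; field.
Qed.

Lemma Rpower_quarter_mult_4 (alpha : R) : 0 < alpha ->
  Rpower (4 * alpha) (1 / 4) = sqrt 2 * Rpower alpha (1 / 4).
Proof.
  intros Halpha; rewrite <- Rpower_mult_distr by lra; f_equal.
  replace (Rpower 4 (1 / 4)) with (Rpower (2 * 2) (1 / 4)) by (f_equal; ring).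
  rewrite <- Rpower_mult_distr, <- Rpower_plus by lra.
  replace (1 / 4 + 1 / 4) with (/ 2) by field; apply Rpower_sqrt; lra.
Qed.

Lemma Rpower_quarter_pow_4 (y : R) : 0 < y -> Rpower y (1 / 4) ^ 4 = y.
Proof.
  intros Hy; rewrite <- Rpower_pow by apply exp_pos; rewrite Rpower_mult.
  replace (1 / 4 * INR 4) with 1 by (simpl; field); apply Rpower_1, Hy.
Qed.

Section Omega1.

Variables alpha zeta v : R.
Hypotheses (Halpha : 0 < alpha) (Hzeta : 0 < zeta).

Let z := v ^ 4 / (16 * alpha).

Lemma Omega1_base_pow4 : (- v / Rpower (4 * alpha) (1 / 4)) ^ 4 = 4 * z.
Proof.
  assert (Hq := Rpower_quarter_pow_4 (4 * alpha) ltac:(lra)).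
  assert (0 < Rpower (4 * alpha) (1 / 4)) by apply exp_pos.
  replace ((- v / Rpower (4 * alpha) (1 / 4)) ^ 4) with (v ^ 4 / Rpower (4 * alpha) (1 / 4) ^ 4)
    by (field; lra).
  unfold z; rewrite Hq; field; lra.
Qed.

Lemma Omega1_term_0 (k : nat) :
  Omega1_term alpha zeta v (4 * k) = v * F12_term ((zeta + 1) / 4) (3 / 4) (5 / 4) z k.
Proof.
  unfold Omega1_term, F12_term.
  replace (s_fun (4 * k)) with (/ sqrt 2)
    by (rewrite <- s_fun_0, <- (s_fun_mod4 k 0), Nat.add_0_r; reflexivity).
  rewrite (Gamma_at ((zeta + 1) / 4) ((INR (4 * k) + 1 + zeta) / 4) k),
          (Gamma_at 1 (INR (4 * k) / 4 + 1) k),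
          (Gamma_at (3 / 2) ((INR (4 * k) + 3) / 2) (2 * k))
    by (try lra; rewrite !mult_INR; simpl; field).
  rewrite Gamma_1, poch_1, Gamma_3_2, poch_3_2_double, sqrt_PI_div_2.
  rewrite pow_mult, Omega1_base_pow4, Rpow_mult_distr.
  pose proof (Gamma_pos ((zeta + 1) / 4) ltac:(lra)).
  pose proof (poch_pos (3 / 4) k ltac:(lra)); pose proof (poch_pos (5 / 4) k ltac:(lra)).
  pose proof (INR_fact_lt_0 k); pose proof (pow_lt 4 k ltac:(lra)); pose proof PI_RGT_0.
  assert (0 < sqrt PI) by (apply sqrt_lt_R0; lra); assert (0 < sqrt 2) by (apply sqrt_lt_R0; lra).
  field; repeat split; lra.
Qed.

Lemma Omega1_term_1 (k : nat) :
  Omega1_term alpha zeta v (4 * k + 1)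
  = - (sqrt (2 * PI) * Gamma ((zeta + 2) / 4)
       / (Rpower alpha (1 / 4) * Gamma (1 / 4) * Gamma ((zeta + 1) / 4)))
    * (v ^ 2 * F12_term ((zeta + 2) / 4) (5 / 4) (3 / 2) z k).
Proof.
  unfold Omega1_term, F12_term; rewrite s_fun_mod4, s_fun_1.
  rewrite (Gamma_at ((zeta + 2) / 4) ((INR (4 * k + 1) + 1 + zeta) / 4) k),
          (Gamma_at (5 / 4) (INR (4 * k + 1) / 4 + 1) k),
          (Gamma_at 1 ((INR (4 * k + 1) + 3) / 2) (2 * k + 1))
    by (try lra; rewrite !plus_INR, !mult_INR; simpl; field).
  rewrite Gamma_1, poch_1, Gamma_5_4, fact_double_succ, sqrt_PI_div_2, sqrt_2_PI.
  rewrite pow_add, pow_mult, Omega1_base_pow4, Rpow_mult_distr, Rpower_quarter_mult_4 by exact Halpha.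
  pose proof (Gamma_pos ((zeta + 1) / 4) ltac:(lra)).
  pose proof (Gamma_pos ((zeta + 2) / 4) ltac:(lra)).
  pose proof (Gamma_pos (1 / 4) ltac:(lra)).
  pose proof (poch_pos (3 / 2) k ltac:(lra)); pose proof (poch_pos (5 / 4) k ltac:(lra)).
  pose proof (poch_pos ((zeta + 2) / 4) k ltac:(lra)).
  pose proof (INR_fact_lt_0 k); pose proof (pow_lt 4 k ltac:(lra)); pose proof PI_RGT_0.
  assert (0 < sqrt PI) by (apply sqrt_lt_R0; lra); assert (0 < sqrt 2) by (apply sqrt_lt_R0; lra).
  assert (0 < Rpower alpha (1 / 4)) by apply exp_pos.
  simpl pow; field; repeat split; lra.
Qed.

Lemma Omega1_term_vanishes (k j : nat) :
  (j = 2 \/ j = 3)%nat -> Omega1_term alpha zeta v (4 * k + j) = 0.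
Proof.
  intros Hj; unfold Omega1_term; rewrite s_fun_mod4.
  destruct Hj as [-> | ->]; [rewrite s_fun_2 | rewrite s_fun_3]; unfold Rdiv; ring.
Qed.

Lemma Omega1_series :
  infinite_sum (Omega1_term alpha zeta v)
    (f2 alpha zeta v
     - sqrt (2 * PI) * Gamma ((zeta + 2) / 4)
         / (Rpower alpha (1 / 4) * Gamma (1 / 4) * Gamma ((zeta + 1) / 4)) * f3 alpha zeta v).
Proof.
  apply is_series_Reals; unfold f2, f3; fold z.
  set (K := sqrt (2 * PI) * Gamma ((zeta + 2) / 4)
              / (Rpower alpha (1 / 4) * Gamma (1 / 4) * Gamma ((zeta + 1) / 4))).
  assert (Hzero : is_series (fun _ : nat => 0) 0) by apply is_pseries_one, is_pseries_zero.
  replace (_ - K * _) with (v * F12 ((zeta + 1) / 4) (3 / 4) (5 / 4) z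
    + - K * (v ^ 2 * F12 ((zeta + 2) / 4) (5 / 4) (3 / 2) z) + 0 + 0) by ring.
  apply is_series_interleave4.
  - apply (is_series_ext (fun k => v * F12_term ((zeta + 1) / 4) (3 / 4) (5 / 4) z k)).
    + intros k; symmetry; apply Omega1_term_0.
    + apply is_series_mult_l, is_series_F12; lra.
  - apply (is_series_ext (fun k => - K * (v ^ 2 * F12_term ((zeta + 2) / 4) (5 / 4) (3 / 2) z k))).
    + intros k; symmetry; apply Omega1_term_1.
    + apply is_series_mult_l, is_series_mult_l, is_series_F12; lra.
  - revert Hzero; apply is_series_ext; intros k; symmetry; apply Omega1_term_vanishes; lia.
  - revert Hzero; apply is_series_ext; intros k; symmetry; apply Omega1_term_vanishes; lia.
Qed.

End Omega1.

Theorem mainTheorem3 (alpha zeta : R) (halpha : 0 < alpha) (hzeta : 0 < zeta) :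
  solves_ODE alpha zeta (f1 alpha zeta) /\
  solves_ODE alpha zeta (f2 alpha zeta) /\
  solves_ODE alpha zeta (f3 alpha zeta) /\
  lin_indep3 (f1 alpha zeta) (f2 alpha zeta) (f3 alpha zeta) /\
  (forall v : R,
     infinite_sum (Omega0_term alpha zeta v)
       (f1 alpha zeta v
        - 2 * Gamma (3 / 4) * Gamma ((zeta + 2) / 4)
            / (sqrt alpha * Gamma (1 / 4) * Gamma (zeta / 4)) * f3 alpha zeta v)) /\
  (forall v : R,
     infinite_sum (Omega1_term alpha zeta v)
       (f2 alpha zeta v
        - sqrt (2 * PI) * Gamma ((zeta + 2) / 4)
            / (Rpower alpha (1 / 4) * Gamma (1 / 4) * Gamma ((zeta + 1) / 4))
            * f3 alpha zeta v)).
Proof.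
  split; [apply f1_solves_ODE; assumption |].
  split; [apply f2_solves_ODE; assumption |].
  split; [apply f3_solves_ODE; assumption |].
  split; [apply f123_lin_indep; assumption |].
  split; intros v; [apply Omega0_series | apply Omega1_series]; assumption.
Qed.
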